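(* Fix an active search instance $(h^\star,\mathcal D)$ with $\Pr(V=1)>0$ and costs $c_{\mathrm{rew}},c_{\mathrm{ver}}>0$. Among all distribution-aware pool-based active search policies, there exists an optimal policy (minimizing expected cost) that never stores candidates for later use. In particular, the streaming threshold policy—generate one candidate at a time, verify it immediately if its score $r$ satisfies $h^\star(r)\ge\tau^\star$ and discard it otherwise—is optimal within the class of all distribution-aware pool-based policies, where $\tau^\star\in(0,1)$ is the unique solution of $c_{\mathrm{ver}}\mathbb E_{R\sim\mathcal D}[(h^\star(R)-\tau^\star)_+]=\tau^\star c_{\mathrm{rew}}$.
   Context: An active search instance $(h^\star,\mathcal D)$: $\mathcal D$ a distribution on $\mathbb R$, $h^\star:\mathbb R\to[0,1]$ measurable; each generated candidate has score $R\sim\mathcal D$ and hidden label $V$ with $\Pr(V=1\mid R=r)=h^\star(r)$, candidates i.i.d. A pool-based policy maintains a pool of generated but unverified candidates; at each step, as a (possibly randomized) function of the history (scores, previous verification choices, labels), it either generates a fresh candidate (cost $c_{\mathrm{rew}}$, score observed, added to the pool) or verifies a pool candidate (cost $c_{\mathrm{ver}}$, label observed, candidate removed; it stops and outputs the candidate if the label is $1$); it stops only on a positive label. Cost $c_{\mathrm{rew}}N_{\mathrm{rew}}+c_{\mathrm{ver}}N_{\mathrm{ver}}$, $+\infty$ if no positive is found. Distribution-aware: the policy knows $(\mathcal D,h^\star)$. $(u)_+=\max\{u,0\}$. *)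

From HB Require Import structures.
From mathcomp Require Import all_boot all_order all_algebra.
From mathcomp Require Import all_classical all_reals all_analysis.
Set Implicit Arguments. Unset Strict Implicit. Unset Printing Implicit Defensive.
Import Order.TTheory GRing.Theory Num.Theory.
Local Open Scope classical_set_scope.
Local Open Scope ring_scope.

(* An action is [None] = "generate a fresh candidate" or
   [Some i] = "verify the i-th generated candidate" (candidates are indexed
   0,1,2,... in order of generation).  A (running) history is the
   chronological list [a] of actions taken so far together with the
   chronological list [rs] of the scores of the generated candidates
   (all labels observed so far are 0, since the search stops at the first
   positive label). *)
Definition action := option nat.

Definition ngen (a : seq action) : nat := count (pred1 None) a.


Section Policies.
Variable R : realType.

Definition valid (a : seq action) (rs : seq R) : seq action :=
  None :: [seq Some i | i <- iota 0 (size rs) & Some i \notin a].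

Definition policy := seq action -> seq R -> action -> R.

Definition is_policy (pi : policy) : Prop :=
  [/\ (forall a rs b, 0 <= pi a rs b),
      (forall a rs b, b \notin valid a rs -> pi a rs b = 0),
      (forall a rs, \sum_(b <- valid a rs) pi a rs b = 1) &
      (forall a b, measurable_fun setT
          (fun t : (ngen a).-tuple R => pi a (tval t) b))].

(* The policy never stores candidates: it only ever verifies the candidate
   generated at the immediately preceding step. *)
Definition never_stores (pi : policy) : Prop :=
  forall a rs i, 0 < pi a rs (Some i) ->
    last (Some 0%N) a = None /\ i = (size rs).-1.

Variables (D : probability R R) (h : R -> R) (c_rew c_ver : R).

(* Generating costs c_rew and draws a fresh score from D; verifying
   candidate i costs c_ver and, given the history, its label is 1 with
   probability h (score of i), in which case the search stops. *)
Fixpoint cost_T (pi : policy) (T : nat) (a : seq action) (rs : seq R)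
  : \bar R :=
  match T with
  | 0 => 0%E
  | T'.+1 =>
    (\sum_(b <- valid a rs)
       (pi a rs b)%:E *
       match b with
       | None => c_rew%:E +
                 \int[D]_r cost_T pi T' (rcons a None) (rcons rs r)
       | Some i => c_ver%:E +
                 (1 - h (nth 0 rs i))%:E * cost_T pi T' (rcons a (Some i)) rs
       end)%E
  end.

(* Expected total cost (in [0, +oo]); the partial costs are nondecreasing
   in T, so this is their limit.  It is +oo when no positive is found with
   positive probability, since every step costs at least min(c_rew,c_ver). *)
Definition exp_cost (pi : policy) : \bar R :=
  ereal_sup (range (fun T => cost_T pi T [::] [::])).

(* The two
   side conditions (0 < size rs, newest candidate not yet verified) always
   hold on reachable histories; they only make the policy well defined on
   every (possibly unreachable) history. *)
Definition thr_action (tau : R) (a : seq action) (rs : seq R) : action :=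
  if [&& last (Some 0%N) a == None, (0 < size rs)%N,
         Some (size rs).-1 \notin a & tau <= h (last 0 rs)]
  then Some (size rs).-1 else None.

Definition threshold_policy (tau : R) : policy :=
  fun a rs b => if b == thr_action tau a rs then 1 else 0.

End Policies.

From HB Require Import structures.
From mathcomp Require Import all_boot all_order all_algebra.
From mathcomp Require Import all_classical all_reals all_analysis.
From mathcomp Require Import measurable_realfun ring lra.
Import Order.TTheory GRing.Theory Num.Theory numFieldNormedType.Exports.
Local Open Scope classical_set_scope.
Local Open Scope ring_scope.

(* Let tau solve the threshold equation and V := c_ver / tau.  A stored
   candidate of score r is worth g r := V (h r - tau)_+ = max (0, h r V - c_ver):
   verifying it costs c_ver and, with probability 1 - h r, leaves us back at V.
   The threshold equation says exactly E g(R) = c_rew, so V = c_rew + E [V - g R]: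
   the streaming threshold policy, whose cost-to-go right after drawing r is
   V - g r, costs at most V.
   Conversely, V minus the total worth of the unverified pool bounds the
   cost-to-go of any pool-based policy from below: generating costs c_rew and
   adds expected worth c_rew, verifying a candidate of score r costs c_ver and
   removes worth g r >= h r V - c_ver.  Since the expected cost is a supremum of
   T-step truncated costs and every step costs at least min (c_rew, c_ver), the
   induction carries the factor 1 - (1 - min (c_rew, c_ver) / V)^T, which tends
   to 1. *)

Lemma big_ifeq_seq {T : Type} {idx : T} {op : Monoid.com_law idx}
    {I : eqType} (s : seq I) (x : I) (F : I -> T) :
  x \in s -> uniq s -> \big[op/idx]_(i <- s) (if i == x then F i else idx) = F x.
Proof.
move=> xs s_uniq; rewrite (bigD1_seq x) //= eqxx big1 ?Monoid.mulm1 //.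
by move=> i /negbTE ->.
Qed.

Lemma lee_sum_convex {R : realDomainType} {I : eqType} (s : seq I)
    (w : I -> R) (F : I -> \bar R) (c : R) :
  (forall i, 0 <= w i) -> \sum_(i <- s) w i = 1 ->
  (forall i, i \in s -> c%:E <= F i)%E ->
  (c%:E <= \sum_(i <- s) (w i)%:E * F i)%E.
Proof.
move=> w_ge0 w_sum1 cF.
apply: (@le_trans _ _ (\sum_(i <- s) (w i * c)%:E)%E).
  by rewrite sumEFin -big_distrl /= w_sum1 mul1r.
rewrite big_seq_cond [leRHS]big_seq_cond; apply: lee_sum => i /andP[si _].
by rewrite EFinM; apply: lee_wpmul2l; [rewrite lee_fin | exact: cF].
Qed.

Section TupleMeasurable.
Context {d : measure_display} {T : measurableType d}.

Lemma measurable_nth (x0 : T) n i :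
  measurable_fun setT (fun t : n.-tuple T => nth x0 (tval t) i).
Proof.
have [i_lt_n | n_le_i] := ltnP i n.
  rewrite (_ : (fun t : n.-tuple T => _) = (fun t => tnth t (Ordinal i_lt_n))).
    exact: measurable_tnth.
  by apply: boolp.funext => t; rewrite (tnth_nth x0).
rewrite (_ : (fun t : n.-tuple T => _) = cst x0); first exact: measurable_cst.
by apply: boolp.funext => t; rewrite nth_default // size_tuple.
Qed.

Lemma measurable_rcons_tuple n :
  measurable_fun setT (fun p : n.-tuple T * T => rcons_tuple p.1 p.2).
Proof.
apply/measurable_fun_tnthP => j /=.
have [j_lt_n | n_le_j] := ltnP j n.
  rewrite (_ : _ \o _ = (fun p : n.-tuple T * T => tnth p.1 (Ordinal j_lt_n))).
    exact: measurableT_comp (measurable_tnth _) measurable_fst.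
  apply: boolp.funext => p /=.
  by rewrite !(tnth_nth p.2) /= nth_rcons size_tuple j_lt_n.
have j_eq_n : (j : nat) = n by apply/eqP; rewrite eqn_leq n_le_j -ltnS ltn_ord.
rewrite (_ : _ \o _ = snd); first exact: measurable_snd.
apply: boolp.funext => p /=.
by rewrite (tnth_nth p.2) /= nth_rcons size_tuple j_eq_n ltnn eqxx.
Qed.

End TupleMeasurable.

Lemma ngen_rcons a b : ngen (rcons a b) = (ngen a + (b == None))%N.
Proof. by rewrite /ngen -cats1 count_cat /= addn0; case: b. Qed.

Lemma mem_valid {R : realType} a (rs : seq R) i :
  (Some i \in valid a rs) = (i < size rs)%N && (Some i \notin a).
Proof.
rewrite inE /= mem_map; last by move=> ? ? [].
by rewrite mem_filter mem_iota add0n andbC.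
Qed.

Lemma valid_uniq {R : realType} a (rs : seq R) : uniq (valid a rs).
Proof.
have Some_inj : injective (@Some nat) by move=> ? ? [].
rewrite /= map_inj_uniq // filter_uniq ?iota_uniq // andbT.
by apply/mapP => -[].
Qed.

Section ActiveSearch.
Variables (R : realType) (D : probability R R) (h : R -> R) (cr cv : R).
Hypotheses (mh : measurable_fun setT h) (h01 : forall r, 0 <= h r <= 1).
Hypotheses (cr_gt0 : 0 < cr) (cv_gt0 : 0 < cv).

Local Notation cost := (cost_T D h cr cv).

Let h_ge0 r : 0 <= h r. Proof. by case/andP: (h01 r). Qed.
Let h_le1 r : h r <= 1. Proof. by case/andP: (h01 r). Qed.

Section FixedPolicy.
Variable pi : policy R.
Hypothesis pi_ok : is_policy pi.

Lemma cost_T_ge0 T a rs : (0 <= cost pi T a rs)%E.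
Proof.
have [pi_ge0 _ _ _] := pi_ok.
elim: T a rs => [|T IH] a rs //=.
apply: sume_ge0 => -[i|] _; rewrite mule_ge0 ?lee_fin ?pi_ge0 //.
- by rewrite adde_ge0 ?mule_ge0 ?lee_fin ?subr_ge0 ?(ltW cv_gt0).
- by rewrite adde_ge0 ?lee_fin ?(ltW cr_gt0) // integral_ge0.
Qed.

Lemma measurable_cost_T T n a : ngen a = n ->
  measurable_fun setT (fun t : n.-tuple R => cost pi T a (tval t)).
Proof.
have [_ _ _ pi_meas] := pi_ok.
elim: T n a => [|T IH] n a ngen_a /=; first exact: measurable_cst.
have valid_t (t : n.-tuple R) : valid a (tval t) = valid a (nseq n (0 : R)).
  by rewrite /valid size_tuple size_nseq.
under boolp.eq_fun do rewrite valid_t.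
apply: emeasurable_sum => -[i|]; apply: emeasurable_funM.
- by apply/measurable_EFinP; rewrite -ngen_a; exact: pi_meas.
- apply: emeasurable_funD => //; apply: emeasurable_funM.
    apply/measurable_EFinP; apply: measurable_funB => //.
    by apply: measurableT_comp mh _; exact: measurable_nth.
  by apply: IH; rewrite ngen_rcons addn0.
- by apply/measurable_EFinP; rewrite -ngen_a; exact: pi_meas.
- apply: emeasurable_funD => //.
  have cost_next : measurable_fun setT
      (fun t : n.+1.-tuple R => cost pi T (rcons a None) (tval t)).
    by apply: IH; rewrite ngen_rcons ngen_a addn1.
  exact: measurable_fun_fubini_tonelli_F
    (measurableT_comp cost_next (measurable_rcons_tuple n))
    (fun _ => cost_T_ge0 _ _ _).
Qed.

Lemma measurable_cost_T_generate T a rs : size rs = ngen a ->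
  measurable_fun setT (fun r => cost pi T (rcons a None) (rcons rs r)).
Proof.
move=> /eqP size_rs.
have cost_next : measurable_fun setT
    (fun t : (ngen a).+1.-tuple R => cost pi T (rcons a None) (tval t)).
  by apply: measurable_cost_T; rewrite ngen_rcons addn1.
exact: measurableT_comp cost_next
  (measurableT_comp (measurable_rcons_tuple _) (pair1_measurable (Tuple size_rs))).
Qed.

End FixedPolicy.

Let integral_cst_prob (c : R) : (\int[D]_r c%:E = c%:E)%E.
Proof. by rewrite integral_cst // [X in (_ * X)%E]probability_setT mule1. Qed.

Definition excess (t : R) : R := fine (\int[D]_r (Num.max (h r - t) 0)%:E).

Let max_ge0 (x : R) : 0 <= Num.max x 0.
Proof. by rewrite le_max lexx orbT. Qed.

Lemma measurable_excess_integrand t :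
  measurable_fun setT (fun r => (Num.max (h r - t) 0)%:E).
Proof.
apply/measurable_EFinP/measurable_maxr; last exact: measurable_cst.
exact: measurable_funB.
Qed.

Lemma excessE t : (\int[D]_r (Num.max (h r - t) 0)%:E = (excess t)%:E)%E.
Proof.
rewrite fineK // ge0_fin_numE ?integral_ge0 // => [|r _]; last by rewrite lee_fin.
apply: (@le_lt_trans _ _ (`|t| + 1)%:E); last exact: ltry.
rewrite -integral_cst_prob; apply: ge0_le_integral => //.
- by move=> r _; rewrite lee_fin.
- exact: measurable_excess_integrand.
move=> r _; rewrite lee_fin ge_max addr_ge0 // andbT.
by have := ler_norm (- t); rewrite normrN; have := h_le1 r; lra.
Qed.

Lemma excess_le_shift t s : excess t <= excess s + `|t - s|.
Proof.
rewrite -lee_fin EFinD -!excessE -integral_cst_prob -ge0_integralD //; first last.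
- exact: measurable_excess_integrand.
- by move=> r _; rewrite lee_fin.
apply: ge0_le_integral => //.
- by move=> r _; rewrite lee_fin.
- exact: measurable_excess_integrand.
- by apply: emeasurable_funD => //; exact: measurable_excess_integrand.
move=> r _; rewrite lee_fin ge_max addr_ge0 // andbT.
have := le_max (h r - s) (h r - s) 0; rewrite lexx /=.
by have := ler_norm (s - t); rewrite distrC; lra.
Qed.

Lemma excess_lipschitz t s : `|excess t - excess s| <= `|t - s|.
Proof.
rewrite ler_norml; have := excess_le_shift t s; have := excess_le_shift s t.
by rewrite distrC; lra.
Qed.

Lemma continuous_excess : continuous excess.
Proof.
move=> x; apply/cvgrPdist_le => e e_gt0.
apply: filterS ((cvgrPdist_le _ _).1 (@cvg_id _ (nbhs x)) e e_gt0) => y.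
exact: le_trans (excess_lipschitz x y).
Qed.

Lemma excess_nonincreasing t s : t <= s -> excess s <= excess t.
Proof.
move=> le_ts; rewrite -lee_fin -!excessE.
apply: ge0_le_integral => //.
- by move=> r _; rewrite lee_fin.
- exact: measurable_excess_integrand.
- exact: measurable_excess_integrand.
move=> r _.
by rewrite lee_fin ge_max max_ge0 andbT le_max lerD2l lerN2 le_ts.
Qed.

Lemma excess0 : (excess 0)%:E = (\int[D]_r (h r)%:E)%E.
Proof.
rewrite -excessE; apply: eq_integral => r _.
by rewrite subr0; congr EFin; apply/max_idPl.
Qed.

Lemma excess1 : excess 1 = 0.
Proof.
rewrite /excess (eq_integral (fun _ => 0%E)) ?integral0 // => r _.
by congr EFin; apply/max_idPr; rewrite subr_le0.
Qed.

Lemma threshold_exists : (0 < \int[D]_r (h r)%:E)%E ->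
  exists2 t, 0 < t < 1 & cv * excess t = t * cr.
Proof.
move=> Eh_gt0; pose f t := cv * excess t - t * cr.
have f0 : 0 < f 0 by rewrite /f mul0r subr0 mulr_gt0 // -lte_fin excess0.
have f1 : f 1 < 0 by rewrite /f excess1 mulr0 mul1r sub0r oppr_lt0.
have f_cont : continuous f.
  move=> x; apply: cvgB; last exact: cvgMl.
  exact: cvgMr (continuous_excess x).
have [t t01 ft0] : exists2 t, t \in `[0, 1] & f t = 0.
  apply: IVT; [exact: ler01 | exact: continuous_subspaceT |].
  by rewrite ge_min le_max (ltW f1) (ltW f0) orbT.
exists t; last by apply/eqP; rewrite -subr_eq0; apply/eqP.
have t_neq0 : t != 0 by apply: contraTneq f0 => t0; rewrite -[in f 0]t0 ft0 ltxx.
have t_neq1 : t != 1 by apply: contraTneq f1 => t1; rewrite -t1 ft0 ltxx.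
move: t01; rewrite in_itv /= => /andP[t_ge0 t_le1].
by rewrite !lt_neqAle eq_sym t_neq0 t_ge0 t_neq1 t_le1.
Qed.

Lemma threshold_unique t s :
  cv * excess t = t * cr -> cv * excess s = s * cr -> t = s.
Proof.
have lt_solutions x y :
    cv * excess x = x * cr -> cv * excess y = y * cr -> x < y -> False.
  move=> eq_x eq_y lt_xy; have := excess_nonincreasing _ _ (ltW lt_xy).
  rewrite -(ler_pM2l cv_gt0) eq_x eq_y ler_pM2r // => /(lt_le_trans lt_xy).
  by rewrite ltxx.
move=> eq_t eq_s; case: (ltgtP t s) => // [lt_ts|lt_st].
- by case: (lt_solutions t s eq_t eq_s lt_ts).
- by case: (lt_solutions s t eq_s eq_t lt_st).
Qed.

Section ThresholdPolicy.
Variable tau : R.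

Lemma thr_action_valid a rs : thr_action h tau a rs \in valid a rs.
Proof.
rewrite /thr_action; case: ifP => [/and4P[_ rs_gt0 fresh _] | _].
  by rewrite mem_valid ltn_predL rs_gt0.
by rewrite inE eqxx.
Qed.

Lemma sum_threshold_policy (F : action -> \bar R) a rs :
  (\sum_(b <- valid a rs) (threshold_policy h tau a rs b)%:E * F b =
   F (thr_action h tau a rs))%E.
Proof.
apply: eq_trans (big_ifeq_seq _ _ F (thr_action_valid a rs) (valid_uniq a rs)).
by apply: eq_bigr => b _; rewrite /threshold_policy; case: eqP; rewrite ?mul1e ?mul0e.
Qed.

Lemma threshold_policy_is_policy : is_policy (threshold_policy h tau).
Proof.
split.
- by move=> a rs b; rewrite /threshold_policy; case: ifP.
- move=> a rs b b_notin; rewrite /threshold_policy; case: eqP => // b_thr.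
  by move: b_notin; rewrite b_thr thr_action_valid.
- move=> a rs; rewrite /threshold_policy.
  exact: (big_ifeq_seq _ _ (fun=> 1) (thr_action_valid a rs) (valid_uniq a rs)).
move=> a b; set n := ngen a.
pose g c : R := if b == (if [&& last (Some 0%N) a == None, (0 < n)%N,
  Some n.-1 \notin a & c] then Some n.-1 else None) then 1 else 0.
have -> : (fun t : n.-tuple R => threshold_policy h tau a (tval t) b) =
    (fun t => if tau <= h (nth 0 (tval t) n.-1) then g true else g false).
  apply: boolp.funext => t.
  rewrite /threshold_policy /thr_action size_tuple -(nth_last 0) size_tuple.
  by case: (tau <= _).
apply: measurable_fun_ifT; rewrite ?measurable_cst //.
apply: measurable_fun_ler; first exact: measurable_cst.
by apply: measurableT_comp mh _; exact: measurable_nth.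
Qed.

Lemma threshold_policy_never_stores : never_stores (threshold_policy h tau).
Proof.
move=> a rs i; rewrite /threshold_policy; case: eqP; last by rewrite ltxx.
rewrite /thr_action; case: ifP => [/and4P[/eqP last_a _ _ _] [->] _ | //].
by split.
Qed.

End ThresholdPolicy.

Section OptimalCost.
Variable tau : R.
Hypotheses (tau_gt0 : 0 < tau) (tau_lt1 : tau < 1).
Hypothesis tau_eq : cv * excess tau = tau * cr.

Definition opt_cost : R := cv / tau.

Definition worth (r : R) : R := opt_cost * Num.max (h r - tau) 0.

Definition pool_worth (a : seq action) (rs : seq R) : R :=
  \sum_(j <- iota 0 (size rs) | Some j \notin a) worth (nth 0 rs j).

Lemma opt_cost_gt0 : 0 < opt_cost.
Proof. by rewrite divr_gt0. Qed.

Lemma opt_costM_tau : opt_cost * tau = cv.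
Proof. by rewrite mulfVK ?gt_eqF. Qed.

Lemma cv_lt_opt_cost : cv < opt_cost.
Proof. by rewrite ltr_pdivlMr // gtr_pMr. Qed.

Lemma worthE r : worth r = if tau <= h r then h r * opt_cost - cv else 0.
Proof.
rewrite /worth; case: ifPn => [le_tau_h | /negbTE lt_h_tau].
  by rewrite (max_idPl _) ?subr_ge0 // mulrBr opt_costM_tau mulrC.
by rewrite (max_idPr _) ?mulr0 // subr_le0 ltW // ltNge lt_h_tau.
Qed.

Lemma worth_ge0 r : 0 <= worth r.
Proof. by rewrite mulr_ge0 ?(ltW opt_cost_gt0). Qed.

Lemma worth_ge_gain r : h r * opt_cost - cv <= worth r.
Proof.
rewrite worthE; case: ifPn => // /negbTE lt_h_tau.
rewrite subr_le0 -opt_costM_tau mulrC ler_wpM2l ?(ltW opt_cost_gt0) //.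
by rewrite ltW // ltNge lt_h_tau.
Qed.

Lemma worth_le_opt_cost r : worth r <= opt_cost.
Proof.
rewrite /worth ler_piMr ?(ltW opt_cost_gt0) // ge_max ler01 andbT.
by have := h_le1 r; have := tau_gt0; lra.
Qed.

Lemma measurable_worth : measurable_fun setT (fun r => (worth r)%:E).
Proof.
apply/measurable_EFinP; apply: measurable_funM; first exact: measurable_cst.
by apply/measurable_EFinP; exact: measurable_excess_integrand.
Qed.

Lemma integral_worth : (\int[D]_r (worth r)%:E = cr%:E)%E.
Proof.
under eq_integral do rewrite /worth EFinM.
rewrite ge0_integralZl_EFin ?(ltW opt_cost_gt0) //; last 2 first.
- by move=> r _; rewrite lee_fin.
- exact: measurable_excess_integrand.
by rewrite excessE -EFinM /opt_cost mulrAC tau_eq mulrAC mulfV ?gt_eqF ?mul1r.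
Qed.

Lemma pool_worth_ge0 a rs : 0 <= pool_worth a rs.
Proof. by apply: sumr_ge0 => j _; exact: worth_ge0. Qed.

Lemma pool_worth_verify a rs i : (i < size rs)%N -> Some i \notin a ->
  pool_worth a rs = worth (nth 0 rs i) + pool_worth (rcons a (Some i)) rs.
Proof.
move=> lt_i_rs i_fresh; rewrite /pool_worth big_mkcond.
rewrite (bigD1_seq i) ?mem_iota ?iota_uniq //= i_fresh; congr (_ + _).
rewrite big_mkcond [RHS]big_mkcond; apply: eq_bigr => j _.
rewrite mem_rcons inE negb_or; case: (eqVneq j i) => [->|ne_ji] /=.
  by rewrite eqxx.
by have -> : (Some j == Some i) = false by apply: contra_neqF ne_ji => /eqP[].
Qed.

Lemma pool_worth_generate a rs r :
  pool_worth (rcons a None) (rcons rs r) <= pool_worth a rs + worth r.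
Proof.
rewrite /pool_worth size_rcons -addn1 iotaD add0n big_cat /= big_cons big_nil.
apply: lerD; last first.
  rewrite nth_rcons ltnn eqxx addr0.
  by case: ifP => _; [exact: lexx | exact: worth_ge0].
rewrite le_eqVlt; apply/predU1P; left.
rewrite big_seq_cond [RHS]big_seq_cond.
apply: eq_big => j; first by rewrite mem_rcons inE.
by rewrite mem_iota add0n => /andP[/andP[_ lt_j_rs] _]; rewrite nth_rcons lt_j_rs.
Qed.

Definition step_rate : R := Num.min cr cv / opt_cost.

Definition horizon_weight (T : nat) : R := 1 - (1 - step_rate) ^+ T.

Lemma step_rate_gt0 : 0 < step_rate.
Proof. by rewrite divr_gt0 ?opt_cost_gt0 // lt_min cr_gt0. Qed.

Lemma step_rate_lt1 : step_rate < 1.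
Proof.
rewrite ltr_pdivrMr ?opt_cost_gt0 // mul1r.
by rewrite (le_lt_trans _ cv_lt_opt_cost) // ge_min lexx orbT.
Qed.

Lemma horizon_weight01 T : 0 <= horizon_weight T <= 1.
Proof.
have q_ge0 : 0 <= 1 - step_rate by have := step_rate_lt1; lra.
have q_le1 : 1 - step_rate <= 1 by have := step_rate_gt0; lra.
by rewrite /horizon_weight subr_ge0 exprn_ile1 //= gerBl exprn_ge0.
Qed.

Lemma horizon_weight_step T z c : z <= opt_cost -> Num.min cr cv <= c ->
  horizon_weight T.+1 * z <= horizon_weight T * z + (1 - horizon_weight T) * c.
Proof.
move=> z_le min_le_c; set w := horizon_weight T.
have [w_ge0 w_le1] := andP (horizon_weight01 T).
have -> : horizon_weight T.+1 = w + step_rate * (1 - w).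
  by rewrite /w /horizon_weight exprS; ring.
have rate_opt : step_rate * opt_cost = Num.min cr cv.
  by rewrite mulfVK ?gt_eqF ?opt_cost_gt0.
rewrite mulrDl lerD2l; apply: (@le_trans _ _ (step_rate * (1 - w) * opt_cost)).
  by rewrite ler_wpM2l // mulr_ge0 ?subr_ge0 // ltW // step_rate_gt0.
by rewrite mulrAC rate_opt mulrC ler_wpM2l ?subr_ge0.
Qed.

Lemma horizon_weight_step_verify T x y p :
  0 <= p <= 1 -> 0 <= y -> p * opt_cost - cv <= x -> 0 <= x ->
  horizon_weight T.+1 * (opt_cost - (x + y)) <=
  cv + (1 - p) * (horizon_weight T * (opt_cost - y)).
Proof.
move=> /andP[p_ge0 p_le1] y_ge0 gain_le_x x_ge0.
have [w_ge0 _] := andP (horizon_weight01 T).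
apply: le_trans (horizon_weight_step T _ cv _ _) _; first by lra.
  by rewrite ge_min lexx orbT.
rewrite -subr_ge0.
have -> : cv + (1 - p) * (horizon_weight T * (opt_cost - y)) -
    (horizon_weight T * (opt_cost - (x + y)) + (1 - horizon_weight T) * cv) =
    horizon_weight T * ((x - (p * opt_cost - cv)) + p * y) by ring.
by rewrite mulr_ge0 // addr_ge0 ?subr_ge0 // mulr_ge0.
Qed.

Lemma horizon_weight_step_generate T y g :
  y <= opt_cost -> horizon_weight T * y <= g + horizon_weight T * cr ->
  horizon_weight T.+1 * y <= cr + g.
Proof.
move=> y_le w_y_le; have := horizon_weight_step T y cr y_le.
by rewrite ge_min lexx => /(_ isT); lra.
Qed.

Lemma horizon_weight_cvg : horizon_weight T @[T --> \oo] --> (1 : R).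
Proof.
rewrite -[X in _ --> X]subr0; apply: cvgB; first exact: cvg_cst.
have rate_gt0 := step_rate_gt0; have rate_lt1 := step_rate_lt1.
by apply: cvg_expr; rewrite ger0_norm; lra.
Qed.

Lemma integral_generate_lower_bound (G : R -> \bar R) w y :
  0 <= w -> 0 <= y -> measurable_fun setT G -> (forall r, 0 <= G r)%E ->
  (forall r, (w * (y - worth r))%:E <= G r)%E ->
  ((w * y)%:E <= \int[D]_r G r + (w * cr)%:E)%E.
Proof.
move=> w_ge0 y_ge0 mG G_ge0 G_ge.
have w_worth_ge0 r : (0 <= (w * worth r)%:E)%E.
  by rewrite lee_fin mulr_ge0 ?worth_ge0.
have mw : measurable_fun setT (fun r => (w * worth r)%:E).
  under boolp.eq_fun do rewrite EFinM.
  exact: emeasurable_funM measurable_worth.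
have <- : (\int[D]_r (w * worth r)%:E = (w * cr)%:E)%E.
  under eq_integral do rewrite EFinM.
  rewrite ge0_integralZl_EFin ?integral_worth //; last exact: measurable_worth.
  by move=> r _; rewrite lee_fin worth_ge0.
rewrite -ge0_integralD // -[X in (X <= _)%E]integral_cst_prob.
apply: ge0_le_integral => //.
- by move=> r _; rewrite lee_fin mulr_ge0.
- exact: emeasurable_funD.
move=> r _; apply: le_trans (leeD2r _ (G_ge r)).
by rewrite -EFinD -mulrDr subrK.
Qed.

Lemma cost_T_ge_weighted pi : is_policy pi -> forall T a rs, size rs = ngen a ->
  ((horizon_weight T * (opt_cost - pool_worth a rs))%:E <= cost pi T a rs)%E.
Proof.
move=> pi_ok; have [pi_ge0 _ pi_sum1 _] := pi_ok.
elim=> [|T IH] a rs size_rs; first by rewrite /horizon_weight expr0 subrr mul0r.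
have [w_ge0 _] := andP (horizon_weight01 T).
apply: lee_sum_convex => // -[i|] b_valid.
  move: b_valid; rewrite mem_valid => /andP[lt_i fresh_i].
  rewrite (pool_worth_verify a rs i lt_i fresh_i).
  have IHi := IH (rcons a (Some i)) rs; rewrite ngen_rcons addn0 in IHi.
  apply: (@le_trans _ _ ((cv + (1 - h (nth 0 rs i)) *
      (horizon_weight T * (opt_cost - pool_worth (rcons a (Some i)) rs)))%:E)).
    by rewrite lee_fin horizon_weight_step_verify
      ?pool_worth_ge0 ?worth_ge0 ?worth_ge_gain.
  rewrite EFinD EFinM; apply: leeD2l; apply: lee_wpmul2l; last exact: IHi.
  by rewrite lee_fin subr_ge0.
have [y_le0 | y_gt0] := lerP (opt_cost - pool_worth a rs) 0.
  have [w'_ge0 _] := andP (horizon_weight01 T.+1).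
  apply: (@le_trans _ _ 0%E); first by rewrite lee_fin mulr_ge0_le0.
  rewrite adde_ge0 ?lee_fin ?(ltW cr_gt0) // integral_ge0 // => r _.
  exact: cost_T_ge0.
have G_ge r : ((horizon_weight T * (opt_cost - pool_worth a rs - worth r))%:E <=
    cost pi T (rcons a None) (rcons rs r))%E.
  apply: le_trans (IH _ _ _); last by rewrite size_rcons ngen_rcons size_rs addn1.
  rewrite lee_fin ler_wpM2l // -addrA lerD2l -opprD lerN2.
  exact: pool_worth_generate.
have := integral_generate_lower_bound _ _ _ w_ge0 (ltW y_gt0)
  (measurable_cost_T_generate pi pi_ok T a rs size_rs)
  (fun r => cost_T_ge0 pi pi_ok _ _ _) G_ge.
case: (\int[D]_r _)%E => [g | | ] //=; last by rewrite addey ?leey.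
rewrite -EFinD !lee_fin => /(horizon_weight_step_generate T) -> //.
by have := pool_worth_ge0 a rs; lra.
Qed.

Lemma exp_cost_ge_opt_cost pi : is_policy pi ->
  (opt_cost%:E <= exp_cost D h cr cv pi)%E.
Proof.
move=> pi_ok.
have weighted_cvg : (horizon_weight T * opt_cost)%:E @[T --> \oo] --> opt_cost%:E.
  apply: cvg_EFin; first exact: nearW.
  by rewrite -[X in _ --> X]mul1r; exact: cvgMl horizon_weight_cvg.
rewrite -(cvg_lim _ weighted_cvg) //; apply: lime_le; first exact: cvgP weighted_cvg.
apply: nearW => T; apply: le_trans (ereal_sup_ubound _); last by exists T.
have := cost_T_ge_weighted pi pi_ok T [::] [::] erefl.
by rewrite /pool_worth big_nil subr0.
Qed.

Lemma integral_opt_cost_sub_worth :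
  (\int[D]_r (opt_cost - worth r)%:E = (opt_cost - cr)%:E)%E.
Proof.
have sub_ge0 r : (0 <= (opt_cost - worth r)%:E)%E.
  by rewrite lee_fin subr_ge0 worth_le_opt_cost.
have msub : measurable_fun setT (fun r => (opt_cost - worth r)%:E).
  apply/measurable_EFinP; apply: measurable_funB; first exact: measurable_cst.
  by apply/measurable_EFinP; exact: measurable_worth.
have worth_ge0E r : (0 <= (worth r)%:E)%E by rewrite lee_fin worth_ge0.
have := ge0_integralD D measurableT (fun r _ => sub_ge0 r) msub
  (fun r _ => worth_ge0E r) measurable_worth.
under eq_integral do rewrite -EFinD subrK.
rewrite integral_cst_prob integral_worth.
have := integral_ge0 D (fun r _ => sub_ge0 r).
by case: (\int[D]_r _)%E => [g| |] //= _ [->]; rewrite addrK.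
Qed.

Definition thr_bound (a : seq action) (rs : seq R) : R :=
  if thr_action h tau a rs is Some _ then cv + (1 - h (last 0 rs)) * opt_cost
  else opt_cost.

Lemma thr_bound_ge0 a rs : 0 <= thr_bound a rs.
Proof.
have opt_ge0 := ltW opt_cost_gt0; rewrite /thr_bound; case: thr_action => // _.
by rewrite addr_ge0 ?(ltW cv_gt0) // mulr_ge0 // subr_ge0.
Qed.

Lemma thr_action_generate a rs r : (forall i, Some i \in a -> (i < size rs)%N) ->
  thr_action h tau (rcons a None) (rcons rs r) =
  if tau <= h r then Some (size rs) else None.
Proof.
move=> verified_lt; rewrite /thr_action !last_rcons size_rcons mem_rcons inE /=.
by have -> : (Some (size rs) \in a) = false by apply/negP => /verified_lt; rewrite ltnn.
Qed.

Lemma thr_bound_generate a rs r : (forall i, Some i \in a -> (i < size rs)%N) ->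
  thr_bound (rcons a None) (rcons rs r) = opt_cost - worth r.
Proof.
move=> verified_lt; rewrite /thr_bound thr_action_generate // last_rcons worthE.
by case: ifP => _; [ring | rewrite subr0].
Qed.

Lemma cost_threshold_le T a rs : size rs = ngen a ->
  (forall i, Some i \in a -> (i < size rs)%N) ->
  (cost (threshold_policy h tau) T a rs <= (thr_bound a rs)%:E)%E.
Proof.
have thr_ok := threshold_policy_is_policy tau.
elim: T a rs => [|T IH] a rs size_rs verified_lt; first by rewrite lee_fin thr_bound_ge0.
rewrite /= sum_threshold_policy /thr_bound.
case thr_a: (thr_action h tau a rs) => [i|].
  move: thr_a; rewrite /thr_action; case: ifP => // /and4P[_ rs_gt0 _ _] [<-].
  rewrite (nth_last 0) [leRHS]EFinD EFinM; apply: leeD2l; apply: lee_wpmul2l.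
    by rewrite lee_fin subr_ge0.
  apply: le_trans (IH _ _ _ _) _; first by rewrite ngen_rcons addn0.
    move=> j; rewrite mem_rcons inE => /predU1P[[->] | /verified_lt //].
    by rewrite ltn_predL.
  by rewrite /thr_bound /thr_action last_rcons.
apply: (@le_trans _ _ (cr%:E + \int[D]_r (opt_cost - worth r)%:E)%E).
  apply: leeD2l; apply: ge0_le_integral => //.
  - by move=> r _; exact: cost_T_ge0.
  - exact: measurable_cost_T_generate.
  - apply/measurable_EFinP; apply: measurable_funB; first exact: measurable_cst.
    by apply/measurable_EFinP; exact: measurable_worth.
  move=> r _; rewrite -(thr_bound_generate a rs r verified_lt); apply: IH.
    by rewrite size_rcons ngen_rcons size_rs addn1.
  by move=> i; rewrite mem_rcons inE size_rcons => /verified_lt /ltnW.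
by rewrite integral_opt_cost_sub_worth -EFinD addrC subrK.
Qed.

Lemma exp_cost_threshold_le :
  (exp_cost D h cr cv (threshold_policy h tau) <= opt_cost%:E)%E.
Proof.
apply: ge_ereal_sup => _ [T _ <-].
exact: (cost_threshold_le T [::] [::] erefl).
Qed.

End OptimalCost.

Lemma threshold_eqE t :
  (cv%:E * \int[D]_r (Num.max (h r - t) 0)%:E = (t * cr)%:E)%E <->
  cv * excess t = t * cr.
Proof. by rewrite excessE -EFinM; split => [[]|->]. Qed.

Lemma threshold_policy_optimal tau : 0 < tau < 1 -> cv * excess tau = tau * cr ->
  [/\ is_policy (threshold_policy h tau), never_stores (threshold_policy h tau) &
      forall pi, is_policy pi ->
        (exp_cost D h cr cv (threshold_policy h tau) <= exp_cost D h cr cv pi)%E].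
Proof.
move=> /andP[tau_gt0 tau_lt1] tau_eq; split.
- exact: threshold_policy_is_policy.
- exact: threshold_policy_never_stores.
move=> pi pi_ok; apply: le_trans (exp_cost_threshold_le tau tau_gt0 tau_eq) _.
exact: exp_cost_ge_opt_cost.
Qed.

End ActiveSearch.

Theorem lemma2 (R : realType) (D : probability R R) (h : R -> R)
    (c_rew c_ver : R) :
  measurable_fun setT h ->
  (forall r, 0 <= h r <= 1) ->
  (0 < \int[D]_r (h r)%:E)%E ->
  0 < c_rew -> 0 < c_ver ->
  (exists pi : policy R,
      [/\ is_policy pi, never_stores pi &
          forall pi' : policy R, is_policy pi' ->
            (exp_cost D h c_rew c_ver pi <= exp_cost D h c_rew c_ver pi')%E])
  /\
  (exists! tau : R, 0 < tau < 1 /\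
      (c_ver%:E * \int[D]_r (Num.max (h r - tau) 0)%:E = (tau * c_rew)%:E)%E)
  /\
  (forall tau : R, 0 < tau < 1 ->
      (c_ver%:E * \int[D]_r (Num.max (h r - tau) 0)%:E = (tau * c_rew)%:E)%E ->
      [/\ is_policy (threshold_policy h tau),
          never_stores (threshold_policy h tau) &
          forall pi' : policy R, is_policy pi' ->
            (exp_cost D h c_rew c_ver (threshold_policy h tau)
               <= exp_cost D h c_rew c_ver pi')%E]).
Proof.
move=> mh h01 Eh_gt0 cr_gt0 cv_gt0.
have eqE := threshold_eqE R D h c_rew c_ver mh h01.
have optimal := threshold_policy_optimal R D h c_rew c_ver mh h01 cr_gt0 cv_gt0.
have [tau tau01 tau_eq] :=
  threshold_exists R D h c_rew c_ver mh h01 cr_gt0 cv_gt0 Eh_gt0.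
split; [|split].
- by exists (threshold_policy h tau); exact: optimal.
- exists tau; split; first by split; last exact/eqE.
  move=> s [_ /eqE s_eq].
  exact: threshold_unique R D h c_rew c_ver mh h01 cr_gt0 cv_gt0 _ _ tau_eq s_eq.
- by move=> t t01 /eqE; exact: optimal.
Qed.
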